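(* Let $\mathcal{G}_s$ be a connected signed graph on nodes $\{1,\dots,n\}$ with symmetric real weight matrix $W$, signed adjacency matrix $A_s$, signed degree matrix $D_s=\mathrm{diag}\big(\sum_j|[A_s]_{ij}|\big)$ and signed Laplacian $L_s=D_s-A_s$. Take node $n$ as the single input node and partition $$L_s=\begin{bmatrix}A_s^f & B_s^f\\ (B_s^f)^T & a_s\end{bmatrix},\qquad A_s^f\in\mathbb{R}^{(n-1)\times(n-1)},\ B_s^f\in\mathbb{R}^{n-1},$$ and consider the leader-follower signed consensus system $\dot x=-A_s^fx-B_s^fu$ with scalar input $u$. Suppose $\mathcal{G}_s$ is structurally balanced, i.e. there is $G_t=\mathrm{diag}(\sigma_1,\dots,\sigma_n)$, $\sigma_i\in\{\pm1\}$, with $G_tA_sG_t$ entrywise nonnegative, and suppose it is input symmetric: for the unsigned Laplacian $L=G_tL_sG_t$ there is a permutation matrix $\Pi\neq I$ with $\Pi L=L\Pi$ and $\Pi e_n=e_n$. Then the system $\dot x=-A_s^fx-B_s^fu$ is uncontrollable.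
   Context: $L=G_tL_sG_t$ is the Laplacian of the underlying unsigned graph with edge weights $|W_{ij}|$; a permutation matrix commuting with it corresponds to a weight-preserving graph automorphism, here required to fix the input node $n$ and be nontrivial. *)

From mathcomp Require Import all_boot all_order all_fingroup all_algebra.
Set Implicit Arguments. Unset Strict Implicit. Unset Printing Implicit Defensive.
Import GRing.Theory Num.Theory.
Local Open Scope ring_scope.

(* Signed graph on nodes 'I_n given by its symmetric signed adjacency
   (weight) matrix A : 'M[R]_n, A i j = W_ij, zero diagonal. *)

Definition signed_graph (R : numDomainType) (n : nat) (A : 'M[R]_n) : Prop :=
  A^T = A /\ (forall i, A i i = 0).

Definition graph_connected (R : numDomainType) (n : nat) (A : 'M[R]_n) : Prop :=
  forall i j : 'I_n, connect (fun k l => A k l != 0) i j.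

Definition signed_degree (R : numDomainType) (n : nat) (A : 'M[R]_n) : 'M[R]_n :=
  diag_mx (\row_i \sum_j `|A i j|).

Definition signed_laplacian (R : numDomainType) (n : nat) (A : 'M[R]_n) : 'M[R]_n :=
  signed_degree A - A.

Definition is_gauge (R : numDomainType) (n : nat) (G : 'M[R]_n) : Prop :=
  exists s : 'rV[R]_n, (forall i, s 0 i = 1 \/ s 0 i = -1) /\ G = diag_mx s.

Definition structurally_balanced_by (R : numDomainType) (n : nat)
  (A G : 'M[R]_n) : Prop :=
  is_gauge G /\ forall i j, 0 <= (G *m A *m G) i j.

Definition follower_block (R : ringType) (m : nat) (L : 'M[R]_m.+1) : 'M[R]_m :=
  \matrix_(i < m, j < m) L (widen_ord (leqnSn m) i) (widen_ord (leqnSn m) j).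

Definition input_block (R : ringType) (m : nat) (L : 'M[R]_m.+1) : 'cV[R]_m :=
  \col_(i < m) L (widen_ord (leqnSn m) i) ord_max.

Definition ctrb_mx (R : ringType) (m : nat) (A : 'M[R]_m) (B : 'cV[R]_m)
  : 'M[R]_m :=
  \matrix_(i < m, k < m) ((A ^+ k) *m B) i 0.

Definition controllable (F : fieldType) (m : nat) (A : 'M[F]_m) (B : 'cV[F]_m)
  : bool := \rank (ctrb_mx A B) == m.

(** Writing [L = Gt L_s Gt], the nontrivial symmetry [Pi] of [L] that fixes
    the input node becomes the symmetry [P = Gt Pi Gt] of [L_s] (since
    [Gt^2 = 1]), and [P] is block diagonal with respect to the partition
    (followers | input) with a [1] in the input corner.  Its follower block
    [P_f != 1] therefore commutes with [A_s^f] and fixes [B_s^f], so every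
    column [(A_s^f)^k B_s^f] of the Kalman matrix is killed by [P_f - 1 != 0]
    and the Kalman matrix is singular. *)

From mathcomp Require Import all_boot all_order all_fingroup all_algebra.
Set Implicit Arguments. Unset Strict Implicit. Unset Printing Implicit Defensive.
Import GRing.Theory Num.Theory.
Local Open Scope ring_scope.

Section Kalman.
Variables (F : fieldType) (m : nat).
Implicit Types (A P : 'M[F]_m) (B : 'cV[F]_m).

Lemma mulmx_ctrb_mx n (X : 'M[F]_(n, m)) A B :
  X *m ctrb_mx A B = \matrix_(i < n, k < m) (X *m (A ^+ k *m B)) i 0.
Proof. by apply/matrixP => i k; rewrite !mxE; apply: eq_bigr => j _; rewrite mxE. Qed.

Lemma controllable_lker0 n (X : 'M[F]_(n, m)) A B :
  controllable A B -> (forall k, X *m (A ^+ k *m B) = 0) -> X = 0.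
Proof.
move=> /row_free_inj injC XAkB0; apply: injC => /=.
by rewrite mul0mx mulmx_ctrb_mx; apply/matrixP => i k; rewrite mxE XAkB0 !mxE.
Qed.

Lemma comm_mx_uncontrollable A B P :
  comm_mx P A -> P *m B = B -> P != 1%:M -> ~~ controllable A B.
Proof.
move=> PA PB; apply: contra => ctrlAB; rewrite -subr_eq0; apply/eqP.
apply: (controllable_lker0 ctrlAB) => k.
have PAk : P *m A ^+ k = A ^+ k *m P.
  by have := commrX k (PA : GRing.comm P A); rewrite /GRing.comm -!mulmxE.
by rewrite mulmxBl mul1mx mulmxA PAk -mulmxA PB subrr.
Qed.

End Kalman.

Section Blocks.
Variables (R : comNzRingType) (m : nat).
Implicit Types (M P X Y : 'M[R]_m.+1).
Local Notation w := (widen_ord (leqnSn m)).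

Lemma widen_ord_neq_max (i : 'I_m) : (w i == ord_max) = false.
Proof. by rewrite -val_eqE /= ltn_eqF. Qed.

Lemma follower_blockN M : follower_block (- M) = - follower_block M.
Proof. by apply/matrixP => i j; rewrite !mxE. Qed.

Lemma input_blockN M : input_block (- M) = - input_block M.
Proof. by apply/matrixP => i j; rewrite !mxE. Qed.

Lemma follower_block_mul X Y :
  follower_block (X *m Y)
  = follower_block X *m follower_block Y + input_block X *m (input_block Y^T)^T.
Proof.
apply/matrixP => i j; rewrite !mxE big_ord_recr /= big_ord1 !mxE.
by congr (_ + _); apply: eq_bigr => k _; rewrite !mxE.
Qed.

Lemma input_block_mul X Y :
  input_block (X *m Y)
  = follower_block X *m input_block Y + Y ord_max ord_max *: input_block X.
Proof.
apply/matrixP => i j; rewrite !mxE big_ord_recr /= (mulrC (Y _ _)).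
by congr (_ + _); apply: eq_bigr => k _; rewrite !mxE.
Qed.

Definition input_decoupled P := input_block P = 0 /\ input_block P^T = 0.

Lemma input_decoupled_mul P Q :
  input_decoupled P -> input_decoupled Q -> input_decoupled (P *m Q).
Proof.
move=> [P0 PT0] [Q0 QT0]; rewrite /input_decoupled trmx_mul !input_block_mul.
by rewrite P0 Q0 PT0 QT0 !mulmx0 !scaler0 !addr0.
Qed.

Lemma diag_mx_input_decoupled (d : 'rV[R]_m.+1) : input_decoupled (diag_mx d).
Proof.
suff d0 : input_block (diag_mx d) = 0 by rewrite /input_decoupled tr_diag_mx.
by apply/matrixP => i j; rewrite !mxE widen_ord_neq_max mulr0n.
Qed.

Lemma input_block_perm_mx (s : 'S_m.+1) :
  s ord_max = ord_max -> input_block (perm_mx s : 'M[R]_m.+1) = 0.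
Proof.
move=> smax; apply/matrixP => i j; rewrite !mxE -{1}smax.
by rewrite (inj_eq perm_inj) widen_ord_neq_max.
Qed.

Lemma perm_mx_input_decoupled (s : 'S_m.+1) :
  s ord_max = ord_max -> input_decoupled (perm_mx s : 'M[R]_m.+1).
Proof.
move=> smax; split; first exact: input_block_perm_mx.
by rewrite tr_perm_mx input_block_perm_mx // -{1}smax permK.
Qed.

Lemma follower_block_comm_mx P M :
  input_decoupled P -> P ord_max ord_max = 1 -> comm_mx P M ->
  comm_mx (follower_block P) (follower_block M)
  /\ follower_block P *m input_block M = input_block M.
Proof.
move=> [P0 PT0] P1 PM; split.
  have := congr1 (@follower_block _ _) PM.
  by rewrite !follower_block_mul P0 PT0 mul0mx trmx0 mulmx0 !addr0.
have := congr1 (@input_block _ _) PM.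
by rewrite !input_block_mul P0 P1 mulmx0 scaler0 scale1r addr0 add0r.
Qed.

End Blocks.

Lemma follower_system_uncontrollable (F : fieldType) m (P M : 'M[F]_m.+1) :
  input_decoupled P -> P ord_max ord_max = 1 -> comm_mx P M ->
  follower_block P != 1%:M ->
  ~~ controllable (follower_block M) (input_block M).
Proof.
move=> Pdec P1 PM; have [PfMf PfBf] := follower_block_comm_mx Pdec P1 PM.
exact: comm_mx_uncontrollable.
Qed.

Lemma comm_mx_conj_invol (R : pzRingType) n (G P M : 'M[R]_n) :
  G *m G = 1%:M -> comm_mx P (G *m M *m G) -> comm_mx (G *m P *m G) M.
Proof.
move=> GG PM; rewrite /comm_mx.
transitivity (G *m (P *m (G *m M *m G)) *m G).
  by rewrite !mulmxA -(mulmxA _ G G) GG mulmx1.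
by rewrite PM !mulmxA GG mul1mx.
Qed.

Lemma diag_mx_invol (R : pzRingType) n (d : 'rV[R]_n) :
  (forall i, d 0 i ^+ 2 = 1) -> diag_mx d *m diag_mx d = 1%:M.
Proof.
move=> d2; rewrite mulmx_diag -diag_const_mx; congr diag_mx.
by apply/matrixP => a b; rewrite !mxE -expr2 d2.
Qed.

Lemma conj_diag_mxE (R : comPzRingType) n (d : 'rV[R]_n) (X : 'M[R]_n) i j :
  (diag_mx d *m X *m diag_mx d) i j = d 0 i * X i j * d 0 j.
Proof. by rewrite mul_mx_diag mxE mul_diag_mx mxE. Qed.

Lemma perm_mx_fixes_delta (R : nzRingType) n (s : 'S_n) (i : 'I_n) :
  perm_mx s *m (delta_mx i 0 : 'cV[R]_n) = delta_mx i 0 -> s i = i.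
Proof.
move/matrixP/(_ i 0); rewrite perm_mxEsub mul_rowsub_mx mul1mx !mxE !eqxx /=.
by case: eqP => // _ /eqP; rewrite eq_sym oner_eq0.
Qed.

Lemma perm_moves_follower m (s : 'S_m.+1) :
  s ord_max = ord_max -> s != 1%g ->
  exists i : 'I_m, s (widen_ord (leqnSn m) i) != widen_ord (leqnSn m) i.
Proof.
move=> smax s_neq1; apply/existsP; apply: contraNT s_neq1 => /existsPn sfix.
apply/eqP/permP => j.
rewrite perm1; case: (unliftP ord_max j) => [i ->|->] //.
have -> : lift ord_max i = widen_ord (leqnSn m) i by apply: val_inj; exact: lift_max.
exact/eqP/negPn/sfix.
Qed.

Theorem theorem4 (R : realFieldType) (m : nat) (A : 'M[R]_m.+1) (Gt : 'M[R]_m.+1) :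
  signed_graph A ->
  graph_connected A ->
  structurally_balanced_by A Gt ->
  (exists s : 'S_m.+1,
      (perm_mx s : 'M[R]_m.+1) != 1%:M /\
      perm_mx s *m (Gt *m signed_laplacian A *m Gt)
        = (Gt *m signed_laplacian A *m Gt) *m perm_mx s /\
      perm_mx s *m (delta_mx ord_max 0 : 'cV[R]_m.+1) = (delta_mx ord_max 0 : 'cV[R]_m.+1)) ->
  ~~ controllable (- follower_block (signed_laplacian A))
                  (- input_block (signed_laplacian A)).
Proof.
move=> _ _ [[d [d_sign ->]] _] [s [Pi_neq1 [PiL Pie]]].
set G := diag_mx d; set Ls := signed_laplacian A.
have d2 i : d 0 i ^+ 2 = 1 by case: (d_sign i) => ->; rewrite ?sqrrN expr1n.
have GG : G *m G = 1%:M by apply: diag_mx_invol.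
have smax := perm_mx_fixes_delta Pie.
have [i si] : exists i : 'I_m, s (widen_ord (leqnSn m) i) != widen_ord (leqnSn m) i.
  by apply: perm_moves_follower => //; apply: contra Pi_neq1 => /eqP->; rewrite perm_mx1.
set P := G *m perm_mx s *m G.
have Pdec : input_decoupled P.
  apply: input_decoupled_mul; last exact: diag_mx_input_decoupled.
  apply: input_decoupled_mul; first exact: diag_mx_input_decoupled.
  exact: perm_mx_input_decoupled.
have P1 : P ord_max ord_max = 1 by rewrite conj_diag_mxE !mxE !smax eqxx mulr1 -expr2.
have PLs : comm_mx P (- Ls) by exact/comm_mxN/(comm_mx_conj_invol GG PiL).
have Pf_neq1 : follower_block P != 1%:M.
  apply: contra si => /eqP/matrixP/(_ i i).
  rewrite [LHS]mxE conj_diag_mxE !mxE eqxx; case: eqP => // _.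
  by rewrite mulr0 mul0r => /eqP; rewrite eq_sym oner_eq0.
rewrite -follower_blockN -input_blockN.
exact: follower_system_uncontrollable Pdec P1 PLs Pf_neq1.
Qed.
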